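(* Let $\tau,\nu$ be complex $n\times n$ matrices with $T=\sum_{j,k}\tau_{j,k}A_j^\dagger A_k$ and $V=\sum_{l,m}\nu_{l,m}N_lN_m$ Hermitian, set $H_0=V$, $H_1=T$, $\mu^0=\nu$, $\mu^1=\tau$, $H^0_{jk}=N_jN_k$, $H^1_{jk}=A_j^\dagger A_k$, and let $\boldsymbol\gamma=(\gamma_1,\dots,\gamma_{p+1})\in\{0,1\}^{p+1}$ with $|\boldsymbol\gamma|=\sum_q\gamma_q$. For each choice of index pairs $(j_q,k_q)$, $q=1,\dots,p+1$, fix an expansion of the nested commutator $[H^{\gamma_{p+1}}_{j_{p+1}k_{p+1}},\ldots[H^{\gamma_2}_{j_2k_2},H^{\gamma_1}_{j_1k_1}]]$ as a finite sum of terms (''fermionic paths'') $P=(-1)^aY_1\cdots Y_r$, $a\in\{0,1\}$, each $Y_i$ one of $A_j^\dagger,A_k,N_l$ (the empty sum if the nested commutator is zero); write $P\rhd(H^{\gamma_{p+1}}_{j_{p+1}k_{p+1}},\ldots,H^{\gamma_1}_{j_1k_1})$ for the terms of this expansion. Then for $0\le\eta\le n$, $$\big\|[H_{\gamma_{p+1}},\cdots[H_{\gamma_2},H_{\gamma_1}]]\big\|_{\eta}\le\|\tau\|_{\max}^{|\boldsymbol\gamma|}\|\nu\|_{\max}^{p+1-|\boldsymbol\gamma|}\max_{\mathbf{c}_\eta}\deg(\mathbf{c}_\eta),$$ where $\mathbf{c}_\eta$ ranges over configurations in $\{0,1\}^n$ with exactly $\eta$ ones and $$\deg(\mathbf{c}_\eta)=\sum_{\langle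 j_{p+1},k_{p+1}\rangle}\cdots\sum_{\langle j_1,k_1\rangle}\ \sum_{P\rhd(H^{\gamma_{p+1}}_{j_{p+1}k_{p+1}},\ldots,H^{\gamma_1}_{j_1k_1})}\frac12\left(\|P|\mathbf{c}_\eta\rangle\|+\|P^\dagger|\mathbf{c}_\eta\rangle\|\right),$$ with each $\sum_{\langle j_q,k_q\rangle}$ ranging over the pairs $(j_q,k_q)$ such that $\mu^{\gamma_q}_{j_q,k_q}\neq0$.
   Context: Fermionic Fock space on $n$ spin orbitals: the $2^n$-dimensional Hilbert space with orthonormal computational basis $|\mathbf{c}\rangle=|c_0,\dots,c_{n-1}\rangle$. Creation operators: $A_j^\dagger|\dots,0_j,\dots\rangle=(-1)^{\sum_{k<j}c_k}|\dots,1_j,\dots\rangle$, $A_j^\dagger|\dots,1_j,\dots\rangle=0$; annihilation operators $A_j=(A_j^\dagger)^\dagger$; $N_l=A_l^\dagger A_l$, $N=\sum_lN_l$. The $\eta$-electron subspace is spanned by $|\mathbf{c}\rangle$ with $\sum_jc_j=\eta$; $\eta$-electron states are unit vectors in it. For $X$ commuting with $N$, $\|X\|_\eta=\max|\langle\phi_\eta|X|\psi_\eta\rangle|$ over $\eta$-electron states. $\|\cdot\|_{\max}$ is the largest absolute value of a matrix entry. *)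

(* Fermionic Fock space on n spin orbitals, operators as
   square matrices indexed (via enum_rank) by configurations c : 'I_n -> bool. *)
From HB Require Import structures.
From mathcomp Require Import all_boot all_order all_algebra.
Set Implicit Arguments. Unset Strict Implicit. Unset Printing Implicit Defensive.
Import Order.TTheory GRing.Theory Num.Theory.
Local Open Scope ring_scope.

Section Fock.
Variable C : numClosedFieldType.
Variable n : nat.

Definition conf := {ffun 'I_n -> bool}.
Definition dim := #|{: conf}|.
Definition op := 'M[C]_dim.
Definition vec := 'cV[C]_dim.

Definition nelec (c : conf) : nat := (\sum_(k < n) (c k : nat))%N.

Definition adj m1 m2 (A : 'M[C]_(m1, m2)) : 'M[C]_(m2, m1) := (map_mx Num.conj A)^T.

Definition setc (c : conf) (j : 'I_n) (b : bool) : conf :=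
  [ffun k => if k == j then b else c k].

Definition cre (j : 'I_n) : op :=
  \matrix_(r, s)
    (let c := (enum_val s : conf) in let c' := (enum_val r : conf) in
     if (~~ c j) && (c' == setc c j true)
     then (-1) ^+ (\sum_(k < n | (k < j)%N) (c k : nat))%N else 0).
Definition ann (j : 'I_n) : op := adj (cre j).
Definition numop (l : 'I_n) : op := cre l *m ann l.

Definition ket (c : conf) : vec := \col_i (if enum_val i == c then 1 else 0).

Definition vnorm (v : vec) : C := sqrtC (\sum_i `|v i 0| ^+ 2).
Definition matel (phi : vec) (X : op) (psi : vec) : C := (adj phi *m X *m psi) 0 0.

Definition estate (eta : nat) (v : vec) : Prop :=
  (forall i, nelec (enum_val i) != eta -> v i 0 = 0) /\ vnorm v = 1.

Definition maxnorm m1 m2 (A : 'M[C]_(m1, m2)) : C :=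
  \big[Num.max/0]_(i < m1) \big[Num.max/0]_(j < m2) `|A i j|.

Definition Tham (tau : 'M[C]_n) : op :=
  \sum_(j < n) \sum_(k < n) tau j k *: (cre j *m ann k).
Definition Vham (nu : 'M[C]_n) : op :=
  \sum_(l < n) \sum_(m < n) nu l m *: (numop l *m numop m).

(* gamma = false <-> 0 (H_0 = V, mu^0 = nu) ; gamma = true <-> 1 (H_1 = T, mu^1 = tau) *)
Definition Hop (tau nu : 'M[C]_n) (g : bool) : op := if g then Tham tau else Vham nu.
Definition mu (tau nu : 'M[C]_n) (g : bool) : 'M[C]_n := if g then tau else nu.
Definition Hjk (g : bool) (jk : 'I_n * 'I_n) : op :=
  if g then cre jk.1 *m ann jk.2 else numop jk.1 *m numop jk.2.

(* nested commutator [X_p, ... [X_1, X_0]] (X_0 innermost) *)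
Fixpoint nest_nat (X : nat -> op) (q : nat) : op :=
  match q with
  | 0 => X 0%N
  | q'.+1 => X q *m nest_nat X q' - nest_nat X q' *m X q
  end.
Definition nestc p (X : 'I_p.+1 -> op) : op := nest_nat (fun q => X (inord q)) p.

Inductive letter := Cr of 'I_n | An of 'I_n | Nm of 'I_n.
Definition letter_op (y : letter) : op :=
  match y with Cr j => cre j | An k => ann k | Nm l => numop l end.
Definition fermpath := (bool * seq letter)%type.
Definition pathop (P : fermpath) : op :=
  (-1) ^+ P.1 *: foldr (fun y M => letter_op y *m M) 1%:M P.2.

Definition degc (tau nu : 'M[C]_n) p (gamma : 'I_p.+1 -> bool)
  (E : {ffun 'I_p.+1 -> 'I_n * 'I_n} -> seq fermpath) (c : conf) : C :=
  \sum_(js : {ffun 'I_p.+1 -> 'I_n * 'I_n} |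
         [forall q, mu tau nu (gamma q) (js q).1 (js q).2 != 0])
    \sum_(P <- E js) 2^-1 * (vnorm (pathop P *m ket c) + vnorm (adj (pathop P) *m ket c)).

End Fock.

From Pilot Require Import Defs.
From HB Require Import structures.
From mathcomp Require Import all_boot all_order all_algebra ring.
Set Implicit Arguments. Unset Strict Implicit. Unset Printing Implicit Defensive.
Import Order.TTheory GRing.Theory Num.Theory.
Local Open Scope ring_scope.

(* Expanding every H_gamma = sum_jk mu^gamma_jk H^gamma_jk turns the nested
   commutator X into a sum, over index tuples with nonzero weights w, of w times
   the fermionic paths of the chosen expansions, and
   |w| <= ||tau||^|gamma| ||nu||^(p+1-|gamma|) =: W.  A path has at most one
   nonzero entry in each row and each column, so the absolute values of its
   column and row at |c> sum to ||P|c>|| and ||P^dag|c>||.  Hence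
   |X_rs| <= W L_rs, where L is the entrywise sum of the |P|; as X is Hermitian
   up to the sign (-1)^p, also |X_rs| <= W (L_rs + L_sr) / 2.  The Schur test
   (AM-GM on |phi_r| |psi_s|) bounds |<phi|X|psi>| by W times the averages of the
   row sums sum_s (L_rs + L_sr) / 2 = deg(c_r) against |phi_r|^2 and |psi_r|^2,
   which live on eta-electron configurations. *)

Section SparseMatrices.
Variable R : pzSemiRingType.

Definition at_most_one_nz (I : Type) (v : I -> R) :=
  forall i j, v i != 0 -> v j != 0 -> i = j.

Definition col_sparse m1 m2 (M : 'M[R]_(m1, m2)) :=
  forall s, at_most_one_nz (fun r => M r s).
Definition row_sparse m1 m2 (M : 'M[R]_(m1, m2)) :=
  forall r, at_most_one_nz (fun s => M r s).

(* Unlike the usual notion, zero rows and columns are allowed. *)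
Definition monomial m1 m2 (M : 'M[R]_(m1, m2)) := col_sparse M /\ row_sparse M.

Lemma sumr_neq0P (I : finType) (F : I -> R) : \sum_i F i != 0 -> exists i, F i != 0.
Proof.
case: (pickP (fun i => F i != 0)) => [i Fi|F0]; first by exists i.
by rewrite big1 ?eqxx // => i _; apply/eqP/negbFE/F0.
Qed.

Lemma mulmx_neq0P m1 m2 m3 (A : 'M[R]_(m1, m2)) (B : 'M[R]_(m2, m3)) r s :
  (A *m B) r s != 0 -> exists k, A r k != 0 /\ B k s != 0.
Proof.
rewrite mxE => /sumr_neq0P [k ABk]; exists k.
by split; apply: contraNneq ABk => ->; rewrite ?mul0r ?mulr0.
Qed.

Lemma monomial_mul m1 m2 m3 (A : 'M[R]_(m1, m2)) (B : 'M[R]_(m2, m3)) :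
  monomial A -> monomial B -> monomial (A *m B).
Proof.
move=> [cA rA] [cB rB]; split.
- move=> s r r' /mulmx_neq0P [k [A1 B1]] /mulmx_neq0P [k' [A2 B2]].
  by move: A1 A2; rewrite (cB _ _ _ B1 B2); apply: cA.
- move=> r s s' /mulmx_neq0P [k [A1 B1]] /mulmx_neq0P [k' [A2 B2]].
  by move: B1 B2; rewrite (rA _ _ _ A1 A2); apply: rB.
Qed.

Lemma monomial_scale m1 m2 a (A : 'M[R]_(m1, m2)) : monomial A -> monomial (a *: A).
Proof.
have nzA r s : (a *: A) r s != 0 -> A r s != 0.
  by rewrite mxE; apply: contraNneq => ->; rewrite mulr0.
by move=> [cA rA]; split=> ? ? ? /nzA h1 /nzA h2; [apply: cA h1 h2|apply: rA h1 h2].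
Qed.

Lemma monomial1 m : monomial (1%:M : 'M[R]_m).
Proof.
have eq1 r s : (1%:M : 'M[R]_m) r s != 0 -> r = s.
  by rewrite mxE; case: (r =P s) => // _; rewrite mulr0n eqxx.
by split=> ? ? ? /eq1 -> /eq1 ->.
Qed.

End SparseMatrices.

Lemma schur_test (R : numFieldType) (I : finType) (K : I -> I -> R) (a b : I -> R) :
  (forall r s, 0 <= K r s) -> (forall r s, K r s = K s r) ->
  (forall r, 0 <= a r) -> (forall r, 0 <= b r) ->
  \sum_r \sum_s a r * K r s * b s <=
  2^-1 * \sum_r (a r ^+ 2 + b r ^+ 2) * \sum_s K r s.
Proof.
move=> K0 Ksym a0 b0.
have amgm r s : a r * K r s * b s <= 2^-1 * (a r ^+ 2 * K r s + b s ^+ 2 * K s r).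
  have -> : a r * K r s * b s = K r s * (a r * b s) by ring.
  have -> : 2^-1 * (a r ^+ 2 * K r s + b s ^+ 2 * K s r) =
            K r s * ((a r ^+ 2 + b s ^+ 2) / 2) by rewrite (Ksym s r); ring.
  apply: ler_wpM2l => //.
  exact: (real_leif_mean_square (ger0_real (a0 r)) (ger0_real (b0 s))).1.
have <- : \sum_r \sum_s 2^-1 * (a r ^+ 2 * K r s + b s ^+ 2 * K s r) =
          2^-1 * \sum_r (a r ^+ 2 + b r ^+ 2) * \sum_s K r s.
  under eq_bigr do rewrite -mulr_sumr; rewrite -mulr_sumr; congr (_ * _).
  under eq_bigr do rewrite big_split; rewrite big_split /= [X in _ + X]exchange_big.
  by rewrite -big_split; apply: eq_bigr => r _; rewrite mulrDl !mulr_sumr.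
by apply: ler_sum => r _; apply: ler_sum => s _; apply: amgm.
Qed.

Lemma commmx_sum (R : pzRingType) m (I J : finType) (a : I -> 'M[R]_m) (b : J -> 'M[R]_m) :
  (\sum_i a i) *m (\sum_j b j) - (\sum_j b j) *m (\sum_i a i) =
  \sum_i \sum_j (a i *m b j - b j *m a i).
Proof.
rewrite mulmx_suml mulmx_sumr -sumrB; apply: eq_bigr => i _.
by rewrite mulmx_sumr mulmx_suml -sumrB.
Qed.

Lemma prod_if_split (R : comPzSemiRingType) m (g : 'I_m -> bool) (a b : R) :
  \prod_i (if g i then a else b) =
  a ^+ (\sum_i (g i : nat)) * b ^+ (m - \sum_i (g i : nat)).
Proof.
have -> : (m - \sum_i (g i : nat) = \sum_i (~~ g i : nat))%N.
  have e : (\sum_(i < m) (g i + ~~ g i) = m)%N.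
    by rewrite -[RHS]card_ord -sum1_card; apply: eq_bigr => i _; case: (g i).
  by rewrite -{1}e big_split /= addKn.
rewrite -!prodrXr -big_split /=; apply: eq_bigr => i _.
by case: (g i); rewrite ?expr1 ?expr0 ?mulr1 ?mul1r.
Qed.

Section FfunRcons.
Variable T : finType.

Definition ffun_rcons p (xs : {ffun 'I_p.+1 -> T}) (x : T) : {ffun 'I_p.+2 -> T} :=
  [ffun i => if unlift ord_max i is Some j then xs j else x].

Lemma ffun_rcons_bij p : bijective (fun u : T * {ffun 'I_p.+1 -> T} => ffun_rcons u.2 u.1).
Proof.
exists (fun ys : {ffun 'I_p.+2 -> T} => (ys ord_max, [ffun j => ys (lift ord_max j)])).
  by case=> x xs; rewrite ffunE unlift_none; congr pair; apply/ffunP => j; rewrite !ffunE liftK.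
by move=> ys; apply/ffunP => i; rewrite !ffunE; case: unliftP => [j|] ->; rewrite ?ffunE.
Qed.

Lemma ffun_rcons_lift p xs x (j : 'I_p.+1) : ffun_rcons xs x (lift ord_max j) = xs j.
Proof. by rewrite ffunE liftK. Qed.

Lemma ffun_rcons_max p xs x : @ffun_rcons p xs x ord_max = x.
Proof. by rewrite ffunE unlift_none. Qed.

Lemma ffun_rcons_inord p xs x q : (q <= p)%N -> @ffun_rcons p xs x (inord q) = xs (inord q).
Proof.
move=> le_qp; have -> : inord q = lift ord_max (inord q : 'I_p.+1) :> 'I_p.+2.
  by apply: ord_inj; rewrite lift_max !inordK // ltnS // (leq_trans le_qp).
exact: ffun_rcons_lift.
Qed.

Lemma prod_ffun_rcons (R : comPzSemiRingType) p (F : nat -> T -> R) xs x :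
  \prod_(i < p.+2) F i (@ffun_rcons p xs x i) = (\prod_(i < p.+1) F i (xs i)) * F p.+1 x.
Proof.
rewrite big_ord_recr /= ffun_rcons_max; congr (_ * _); apply: eq_bigr => i _.
have -> : widen_ord (leqnSn p.+1) i = lift ord_max i by apply: ord_inj; rewrite lift_max.
by rewrite ffun_rcons_lift.
Qed.

End FfunRcons.

Section BigMax.
Variable R : numDomainType.

Lemma bigmax_ge0 (I : Type) (r : seq I) (P : pred I) (F : I -> R) :
  (forall i, P i -> 0 <= F i) -> 0 <= \big[Num.max/0]_(i <- r | P i) F i.
Proof.
move=> F0; elim/big_ind: _ => // x y x0 y0.
by rewrite comparable_le_max ?x0 // real_comparable ?ger0_real.
Qed.

Lemma real_le_bigmax (I : finType) (P : pred I) (F : I -> R) i0 :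
  (forall i, P i -> F i \is Num.real) -> P i0 -> F i0 <= \big[Num.max/0]_(i | P i) F i.
Proof.
move=> FR Pi0; have : i0 \in index_enum I by rewrite mem_index_enum.
have maxR r : \big[Num.max/0]_(i <- r | P i) F i \is Num.real by rewrite bigmax_real.
elim: (index_enum I) => // h t IH; rewrite inE big_cons => /predU1P [<-|i0t].
  by rewrite Pi0 comparable_le_max ?lexx // real_comparable ?FR.
case: ifP => Ph; last exact: IH.
by rewrite comparable_le_max ?IH ?orbT // real_comparable ?FR.
Qed.

End BigMax.

Section Adjoint.
Variable C : numClosedFieldType.

Lemma adjE m1 m2 (A : 'M[C]_(m1, m2)) i j : adj A i j = (A j i)^*.
Proof. by rewrite /adj !mxE. Qed.

Lemma adj_mul m1 m2 m3 (A : 'M[C]_(m1, m2)) (B : 'M[C]_(m2, m3)) :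
  adj (A *m B) = adj B *m adj A.
Proof.
apply/matrixP => i j; rewrite adjE !mxE rmorph_sum; apply: eq_bigr => k _.
by rewrite rmorphM !adjE mulrC.
Qed.

Lemma adj_sub m1 m2 (A B : 'M[C]_(m1, m2)) : adj (A - B) = adj A - adj B.
Proof. by apply/matrixP => i j; rewrite /adj !mxE rmorphB. Qed.

Lemma monomial_adj m1 m2 (A : 'M[C]_(m1, m2)) : monomial A -> monomial (adj A).
Proof. by move=> [cA rA]; split=> ? ? ?; rewrite !adjE !conjC_eq0; [apply: rA|apply: cA]. Qed.

Lemma normr_entry_sym m (X : 'M[C]_m) (sg : C) r s :
  `|sg| = 1 -> adj X = sg *: X -> `|X r s| = `|X s r|.
Proof.
move=> sg1 /matrixP /(_ s r); rewrite adjE mxE => e.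
by rewrite -norm_conjC e normrM sg1 mul1r.
Qed.

End Adjoint.

Section FockOperators.
Variable C : numClosedFieldType.
Variable n : nat.
Local Notation op := (op C n).
Local Notation conf := (conf n).

Lemma setc_true_inj (c1 c2 : conf) (j : 'I_n) :
  ~~ c1 j -> ~~ c2 j -> setc c1 j true = setc c2 j true -> c1 = c2.
Proof.
move=> h1 h2 /ffunP e; apply/ffunP => k; move: (e k); rewrite !ffunE.
by case: eqP => [->|] //; move: h1 h2; case: (c1 j); case: (c2 j).
Qed.

Lemma monomial_cre (j : 'I_n) : monomial (cre C j).
Proof.
split=> [s r r'|r s s']; rewrite !mxE /=.
- case: ifP => [/andP [_ /eqP e1]|]; last by rewrite eqxx.
  case: ifP => [/andP [_ /eqP e2]|]; last by rewrite eqxx.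
  by move=> _ _; apply: enum_val_inj; rewrite e1 e2.
- case: ifP => [/andP [h1 /eqP e1]|]; last by rewrite eqxx.
  case: ifP => [/andP [h2 /eqP e2]|]; last by rewrite eqxx.
  by move=> _ _; apply/enum_val_inj/(setc_true_inj h1 h2); rewrite -e1 -e2.
Qed.

Lemma monomial_pathop (P : fermpath n) : monomial (pathop C P).
Proof.
have monomial_letter (y : letter n) : monomial (letter_op C y).
  have monomial_ann (j : 'I_n) : monomial (ann C j) := monomial_adj (monomial_cre j).
  case: y => j /=; [exact: monomial_cre|exact: monomial_ann|].
  exact: monomial_mul (monomial_cre j) (monomial_ann j).
apply: monomial_scale; elim: P.2 => [|y s IH] /=; first exact: monomial1.
exact: monomial_mul.
Qed.

Lemma mul_ket m (A : 'M[C]_(m, Defs.dim n)) (c : conf) i :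
  (A *m ket C c) i 0 = A i (enum_rank c).
Proof.
rewrite mxE (bigD1 (enum_rank c)) //= mxE enum_rankK eqxx mulr1 big1 ?addr0 //.
by move=> k /negPf ne; rewrite mxE -(inj_eq enum_rank_inj) enum_valK ne mulr0.
Qed.

Lemma sum_norm_at_most_one_nz (I : finType) (v : I -> C) :
  at_most_one_nz v -> \sum_i `|v i| = sqrtC (\sum_i `|v i| ^+ 2).
Proof.
move=> v1; case: (pickP (fun i => v i != 0)) => [i0 vi0|v0]; last first.
  have {}v0 i : v i = 0 by apply/eqP/negbFE/v0.
  by rewrite !big1 ?sqrtC0 // => i _; rewrite v0 normr0 // expr0n.
have sum_at (f : C -> C) : f 0 = 0 -> \sum_i f (v i) = f (v i0).
  move=> f0; rewrite (bigD1 i0) //= big1 ?addr0 // => i ne.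
  by case: (v i =P 0) => [->|/eqP vi] //; rewrite (v1 _ _ vi vi0) eqxx in ne.
rewrite (sum_at (fun x => `|x|)) ?normr0 // (sum_at (fun x => `|x| ^+ 2)).
  by rewrite sqrCK.
by rewrite normr0 expr0n.
Qed.

Lemma vnorm_ge0 (v : vec C n) : 0 <= vnorm v.
Proof. by rewrite sqrtC_ge0; apply: sumr_ge0 => i _; apply: exprn_ge0. Qed.

Lemma vnorm_mul_ket (M : op) (c : conf) :
  vnorm (M *m ket C c) = sqrtC (\sum_r `|M r (enum_rank c)| ^+ 2).
Proof. by rewrite /vnorm; under eq_bigr do rewrite mul_ket. Qed.

Lemma sum_norm_monomial (M : op) r : monomial M ->
  \sum_s (`|M r s| + `|M s r|) =
  vnorm (M *m ket C (enum_val r)) + vnorm (adj M *m ket C (enum_val r)).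
Proof.
move=> [cM rM]; rewrite big_split addrC !vnorm_mul_ket enum_valK.
have rM' : at_most_one_nz (fun s => adj M s r).
  by move=> s s'; rewrite !adjE !conjC_eq0; apply: rM.
rewrite -(sum_norm_at_most_one_nz (cM r)) -(sum_norm_at_most_one_nz rM').
by congr (_ + _); apply: eq_bigr => s _; rewrite adjE norm_conjC.
Qed.

End FockOperators.

Section MatrixElements.
Variable C : numClosedFieldType.
Variable n : nat.
Local Notation op := (op C n).
Local Notation vec := (vec C n).
Local Notation conf := (conf n).

Lemma norm_matel_le (phi psi : vec) (X : op) :
  `|matel phi X psi| <= \sum_r \sum_s `|phi r 0| * `|X r s| * `|psi s 0|.
Proof.
rewrite /matel mxE exchange_big /=; apply: le_trans (ler_norm_sum _ _ _) _.
apply: ler_sum => r _; rewrite mxE big_distrl /=.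
apply: le_trans (ler_norm_sum _ _ _) _; apply: ler_sum => s _.
by rewrite adjE !normrM norm_conjC.
Qed.

Lemma estate_norm2 eta (v : vec) : estate eta v -> \sum_r `|v r 0| ^+ 2 = 1.
Proof. by case=> _ v1; rewrite -[LHS]sqrtCK -/(vnorm v) v1 expr1n. Qed.

Lemma estate_weighted_le eta (v : vec) (D : conf -> C) M :
  estate eta v -> (forall c, nelec c = eta -> D c <= M) ->
  \sum_r `|v r 0| ^+ 2 * D (enum_val r) <= M.
Proof.
move=> hv DM; rewrite -[M]mul1r -(estate_norm2 hv) mulr_suml.
apply: ler_sum => r _; have [/DM le_DM|ne] := eqVneq (nelec (enum_val r)) eta.
  by rewrite ler_wpM2l ?exprn_ge0.
by rewrite (hv.1 r ne) normr0 expr0n /= !mul0r.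
Qed.

Lemma norm_matel_le_kernel (X : op) (L : 'I_(Defs.dim n) -> 'I_(Defs.dim n) -> C)
    (D : conf -> C) (W M : C) eta (phi psi : vec) :
  (forall r s, `|X r s| = `|X s r|) -> 0 <= W -> (forall r s, 0 <= L r s) ->
  (forall r s, `|X r s| <= W * L r s) ->
  (forall r, \sum_s (L r s + L s r) <= 2 * D (enum_val r)) ->
  (forall c, nelec c = eta -> D c <= M) ->
  estate eta phi -> estate eta psi -> `|matel phi X psi| <= W * M.
Proof.
move=> Xsym W0 L0 XL LD DM hphi hpsi.
pose a r := `|phi r 0|; pose b s := `|psi s 0|; pose K r s := L r s + L s r.
have a0 r : 0 <= a r by exact: normr_ge0.
have b0 s : 0 <= b s by exact: normr_ge0.
have W20 : 0 <= W / 2 by rewrite divr_ge0.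
have XK r s : `|X r s| <= W / 2 * K r s.
  have -> : W / 2 * K r s = (W * L r s + W * L s r) / 2 by rewrite /K; ring.
  by rewrite ler_pdivlMr ?ltr0n // mulr_natr mulr2n {2}Xsym lerD.
apply: le_trans (norm_matel_le _ _ _) _.
apply: le_trans (_ : _ <= W / 2 * \sum_r \sum_s a r * K r s * b s) _.
  rewrite mulr_sumr; apply: ler_sum => r _; rewrite mulr_sumr; apply: ler_sum => s _.
  have -> : W / 2 * (a r * K r s * b s) = a r * (W / 2 * K r s) * b s by ring.
  by rewrite ler_wpM2r ?ler_wpM2l.
have K0 r s : 0 <= K r s by rewrite addr_ge0.
have Ksym r s : K r s = K s r by rewrite /K addrC.
apply: le_trans (ler_wpM2l W20 (schur_test K0 Ksym a0 b0)) _.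
have -> : W * M = W / 2 * (M + M) by field.
apply: (ler_wpM2l W20).
apply: le_trans (_ : _ <= 2^-1 * \sum_r (a r ^+ 2 + b r ^+ 2) * (2 * D (enum_val r))) _.
  rewrite ler_pM2l ?invr_gt0 ?ltr0n //; apply: ler_sum => r _.
  by apply: ler_wpM2l; [rewrite addr_ge0 ?exprn_ge0|apply: LD].
have -> : 2^-1 * \sum_r (a r ^+ 2 + b r ^+ 2) * (2 * D (enum_val r)) =
          \sum_r a r ^+ 2 * D (enum_val r) + \sum_r b r ^+ 2 * D (enum_val r).
  by rewrite -big_split mulr_sumr; apply: eq_bigr => r _ /=; field.
by rewrite lerD // (estate_weighted_le _ DM).
Qed.

End MatrixElements.

Section PathKernel.
Variables (C : numClosedFieldType) (n : nat).
Local Notation op := (op C n).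
Variables (I : finType) (S : pred I) (J : Type) (Ps : I -> seq J) (f : J -> op).

Definition path_kernel r s : C := \sum_(i | S i) \sum_(j <- Ps i) `|f j r s|.

Lemma path_kernel_ge0 r s : 0 <= path_kernel r s.
Proof. by apply: sumr_ge0 => i _; apply: sumr_ge0 => j _; apply: normr_ge0. Qed.

Lemma norm_entry_le_path_kernel (w : I -> C) (W : C) r s :
  (forall i, S i -> `|w i| <= W) ->
  `|(\sum_(i | S i) w i *: \sum_(j <- Ps i) f j) r s| <= W * path_kernel r s.
Proof.
move=> wW; rewrite summxE mulr_sumr; apply: le_trans (ler_norm_sum _ _ _) _.
apply: ler_sum => i Si; rewrite mxE normrM summxE.
by apply: ler_pM; rewrite ?normr_ge0 ?wW ?ler_norm_sum.
Qed.

Lemma path_kernel_row_sum r : (forall j, monomial (f j)) ->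
  \sum_s (path_kernel r s + path_kernel s r) =
  2 * \sum_(i | S i) \sum_(j <- Ps i)
        2^-1 * (vnorm (f j *m ket C (enum_val r)) + vnorm (adj (f j) *m ket C (enum_val r))).
Proof.
move=> fM; rewrite /path_kernel mulr_sumr.
under eq_bigr do rewrite -big_split /=.
rewrite exchange_big /=; apply: eq_bigr => i _.
under eq_bigr do rewrite -big_split /=.
rewrite mulr_sumr exchange_big /=; apply: eq_bigr => j _.
by rewrite mulrA divff ?pnatr_eq0 // mul1r -sum_norm_monomial.
Qed.

End PathKernel.

Section NestedCommutators.
Variables (C : numClosedFieldType) (n : nat).
Local Notation op := (op C n).

Lemma eq_nest (X Y : nat -> op) p :
  (forall q, (q <= p)%N -> X q = Y q) -> nest_nat X p = nest_nat Y p.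
Proof.
elim: p => [|p IH] XY /=; first by rewrite XY.
by rewrite IH ?XY // => q le_qp; apply/XY/leqW.
Qed.

Lemma adj_nest (X : nat -> op) p :
  (forall q, adj (X q) = X q) -> adj (nest_nat X p) = (-1) ^+ p *: nest_nat X p.
Proof.
move=> XH; elim: p => [|p IH] /=; first by rewrite XH scale1r.
rewrite adj_sub !adj_mul IH XH -scalemxAl -scalemxAr exprS mulN1r scaleNr.
by rewrite -scalerBr -scalerN opprB.
Qed.

Lemma nest_expand (T : finType) p (F : nat -> T -> C) (Y : nat -> T -> op) :
  nest_nat (fun q => \sum_x F q x *: Y q x) p =
  \sum_(xs : {ffun 'I_p.+1 -> T})
     (\prod_(i < p.+1) F i (xs i)) *: nest_nat (fun q => Y q (xs (inord q))) p.
Proof.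
elim: p => [|p IH] /=.
  rewrite (reindex (fun x : T => [ffun=> x])) /=; last first.
    exists (fun xs : {ffun 'I_1 -> T} => xs ord0) => [x _|xs _]; first by rewrite ffunE.
    by apply/ffunP => i; rewrite ffunE (ord1 i).
  by apply: eq_bigr => x _; rewrite big_ord1 !ffunE.
rewrite IH commmx_sum pair_big /=.
rewrite (reindex (fun u : T * {ffun 'I_p.+1 -> T} => ffun_rcons u.2 u.1)) /=; last first.
  exact/onW_bij/ffun_rcons_bij.
apply: eq_bigr => -[x xs] _ /=; rewrite prod_ffun_rcons.
rewrite (@eq_nest _ (fun q => Y q (xs (inord q)))); last first.
  by move=> q le_qp; rewrite ffun_rcons_inord.
have -> : inord p.+1 = ord_max :> 'I_p.+2 by apply: val_inj; rewrite /= inordK.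
by rewrite ffun_rcons_max -!scalemxAl -!scalemxAr !scalerA scalerBr [F _ _ * _]mulrC.
Qed.

Lemma Hop_expand (tau nu : 'M[C]_n) g :
  Hop tau nu g = \sum_(x : 'I_n * 'I_n) mu tau nu g x.1 x.2 *: Hjk C g x.
Proof. by rewrite -(pair_bigA _ (fun j k => mu tau nu g j k *: Hjk C g (j, k))); case: g. Qed.

Lemma nestc_Hop_expand p (tau nu : 'M[C]_n) (gamma : 'I_p.+1 -> bool) :
  nestc (fun q => Hop tau nu (gamma q)) =
  \sum_(js : {ffun 'I_p.+1 -> 'I_n * 'I_n})
     (\prod_q mu tau nu (gamma q) (js q).1 (js q).2) *:
     nestc (fun q => Hjk C (gamma q) (js q)).
Proof.
rewrite /nestc (@eq_nest _ (fun q => \sum_x mu tau nu (gamma (inord q)) x.1 x.2 *: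
                                       Hjk C (gamma (inord q)) x)) => [|q _].
  rewrite nest_expand; apply: eq_bigr => js _; congr (_ *: _).
  by apply: eq_bigr => i _; rewrite inord_val.
exact: Hop_expand.
Qed.

End NestedCommutators.

Section MaxNorm.
Variable C : numClosedFieldType.

Lemma maxnorm_ge0 m1 m2 (A : 'M[C]_(m1, m2)) : 0 <= maxnorm A.
Proof. by do 2![apply: bigmax_ge0 => ? _]. Qed.

Lemma maxnorm_ge m1 m2 (A : 'M[C]_(m1, m2)) i j : `|A i j| <= maxnorm A.
Proof.
have rowR k : \big[Num.max/0]_(j < m2) `|A k j| \is Num.real.
  by apply: bigmax_real => // l _; apply: normr_real.
apply: (le_trans (y := \big[Num.max/0]_(j < m2) `|A i j|)).
  by apply: real_le_bigmax => // l _; apply: normr_real.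
by apply: (real_le_bigmax (F := fun k => \big[Num.max/0]_(j < m2) `|A k j|)) => // k _.
Qed.

Lemma norm_weight_le n p (tau nu : 'M[C]_n) (gamma : 'I_p.+1 -> bool)
    (js : {ffun 'I_p.+1 -> 'I_n * 'I_n}) :
  `|\prod_q mu tau nu (gamma q) (js q).1 (js q).2| <=
  maxnorm tau ^+ (\sum_q (gamma q : nat)) *
  maxnorm nu ^+ (p.+1 - \sum_q (gamma q : nat)).
Proof.
rewrite normr_prod -prod_if_split; apply: ler_prod => q _.
by rewrite normr_ge0 /=; case: (gamma q); apply: maxnorm_ge.
Qed.

End MaxNorm.

Lemma degc_ge0 (C : numClosedFieldType) n p (tau nu : 'M[C]_n) (gamma : 'I_p.+1 -> bool)
    (E : {ffun 'I_p.+1 -> 'I_n * 'I_n} -> seq (fermpath n)) (c : conf n) :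
  0 <= degc tau nu gamma E c.
Proof.
apply: sumr_ge0 => js _; apply: sumr_ge0 => P _.
by rewrite mulr_ge0 ?invr_ge0 ?ler0n // addr_ge0 ?vnorm_ge0.
Qed.

Theorem proposition11 (C : numClosedFieldType) (n p : nat)
  (tau nu : 'M[C]_n) (gamma : {ffun 'I_p.+1 -> bool})
  (E : {ffun 'I_p.+1 -> ('I_n * 'I_n)%type} -> seq (fermpath n)) (eta : nat) :
  adj (Tham tau) = Tham tau ->
  adj (Vham nu) = Vham nu ->
  (forall js : {ffun 'I_p.+1 -> ('I_n * 'I_n)%type},
      \sum_(P <- E js) pathop C P = nestc (fun q => Hjk C (gamma q) (js q))) ->
  (eta <= n)%N ->
  forall phi psi : vec C n, estate eta phi -> estate eta psi ->
  `|matel phi (nestc (fun q => Hop tau nu (gamma q))) psi|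
    <= maxnorm tau ^+ (\sum_q (gamma q : nat))%N
       * maxnorm nu ^+ (p.+1 - \sum_q (gamma q : nat))%N
       * \big[Num.max/0]_(c : conf n | nelec c == eta) degc tau nu gamma E c.
Proof.
move=> hT hV hE _ phi psi hphi hpsi.
pose S (js : {ffun 'I_p.+1 -> 'I_n * 'I_n}) :=
  [forall q, mu tau nu (gamma q) (js q).1 (js q).2 != 0].
pose w (js : {ffun 'I_p.+1 -> 'I_n * 'I_n}) :=
  \prod_q mu tau nu (gamma q) (js q).1 (js q).2.
set X := nestc _.
have XE : X = \sum_(js | S js) w js *: \sum_(P <- E js) pathop C P.
  rewrite /X nestc_Hop_expand (bigID S) /= [X in _ + X]big1 ?addr0.
    by apply: eq_bigr => js _; rewrite hE.
  move=> js /forallPn [q /negPn /eqP mu0].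
  by rewrite (bigD1 q) //= mu0 mul0r scale0r.
have Xsym r s : `|X r s| = `|X s r|.
  apply: (normr_entry_sym (sg := (-1) ^+ p)); first by rewrite normrX normrN1 expr1n.
  by apply: adj_nest => q; case: (gamma (inord q)); [exact: hT|exact: hV].
apply: (norm_matel_le_kernel (L := path_kernel S E (@pathop C n))
                             (D := degc tau nu gamma E) Xsym _ _ _ _ _ hphi hpsi).
- by rewrite mulr_ge0 ?exprn_ge0 ?maxnorm_ge0.
- exact: path_kernel_ge0.
- by move=> r s; rewrite XE norm_entry_le_path_kernel // => js _; apply: norm_weight_le.
- by move=> r; rewrite path_kernel_row_sum // => P; apply: monomial_pathop.
- move=> c c_eta; apply: real_le_bigmax => [c' _|]; last exact/eqP.
  exact/ger0_real/degc_ge0.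
Qed.
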